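(* Let $\mathcal{H}_Q$ and $\mathcal{H}_A$ be finite-dimensional Hilbert spaces with $\dim\mathcal{H}_Q = D_Q \le D_A = \dim\mathcal{H}_A$, and let $U_1,\ldots,U_K$ be unitary operators on $\mathcal{H}_Q$ that mutually commute. Then for every unit vector $|\psi_{QA}\rangle \in \mathcal{H}_Q\otimes\mathcal{H}_A$ (possibly entangled) there exist unit vectors $|\xi\rangle\in\mathcal{H}_Q$, $|\chi\rangle\in\mathcal{H}_A$ and a unitary operator $V$ on $\mathcal{H}_Q\otimes\mathcal{H}_A$, independent of $j$, such that for every $j=1,\ldots,K$, $$V\,(U_j\otimes \mathbb{1}_A)\,(|\xi\rangle\otimes|\chi\rangle) = (U_j\otimes\mathbb{1}_A)\,|\psi_{QA}\rangle ,$$ where $\mathbb{1}_A$ is the identity on $\mathcal{H}_A$. *)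

From HB Require Import structures.
From mathcomp Require Import all_boot all_order all_algebra.
From mathcomp Require Import complex mxtens.
From mathcomp Require Import reals.

Set Implicit Arguments.
Unset Strict Implicit.
Unset Printing Implicit Defensive.

Import Order.TTheory GRing.Theory Num.Theory.
Local Open Scope ring_scope.

Definition adjmx {C : numClosedFieldType} {m n : nat} (A : 'M[C]_(m, n))
  : 'M[C]_(n, m) := (map_mx Num.conj A)^T.

Definition unitary {C : numClosedFieldType} {n : nat} (U : 'M[C]_n) : Prop :=
  adjmx U *m U = 1%:M /\ U *m adjmx U = 1%:M.

Definition unit_vec {C : numClosedFieldType} {n : nat} (v : 'cV[C]_n) : Prop :=
  (adjmx v *m v) 0 0 = 1.

From HB Require Import structures.
From mathcomp Require Import all_boot all_order all_algebra.
From mathcomp Require Import complex mxtens.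
From mathcomp Require Import reals.
From mathcomp Require Import sesquilinear spectral.

Set Implicit Arguments.
Unset Strict Implicit.
Unset Printing Implicit Defensive.

Import Order.TTheory GRing.Theory Num.Theory.
Local Open Scope ring_scope.

(* Diagonalize the commuting unitaries simultaneously, U_j = Q D_j Q^*, and
   write (Q^* (x) 1) psi = sum_k e_k (x) a_k.  For each k choose a unitary M_k
   on H_A whose first column is proportional to a_k, say a_k = c_k M_k e_0.
   The block-diagonal unitary B = (+)_k M_k commutes with every D_j (x) 1 and
   maps (sum_k c_k e_k) (x) e_0 to (Q^* (x) 1) psi, so xi = Q c, chi = e_0 and
   V = (Q (x) 1) B (Q^* (x) 1) do the job. *)

Section Adjoint.
Variable C : numClosedFieldType.

Lemma adjmxE m n (A : 'M[C]_(m, n)) : adjmx A = map_mx Num.conj A^T.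
Proof. by rewrite /adjmx map_trmx. Qed.

Lemma adjmxM m n p (A : 'M[C]_(m, n)) (B : 'M[C]_(n, p)) :
  adjmx (A *m B) = adjmx B *m adjmx A.
Proof. by rewrite /adjmx map_mxM trmx_mul. Qed.

Lemma adjmxK m n (A : 'M[C]_(m, n)) : adjmx (adjmx A) = A.
Proof. by apply/matrixP => i j; rewrite /adjmx !mxE conjCK. Qed.

Lemma adjmx1 n : adjmx (1%:M : 'M[C]_n) = 1%:M.
Proof. by rewrite /adjmx map_mx1 trmx1. Qed.

Lemma adjmx_tens m n p q (A : 'M[C]_(m, n)) (B : 'M[C]_(p, q)) :
  adjmx (A *t B) = adjmx A *t adjmx B.
Proof. by rewrite /adjmx map_mxT trmx_tens. Qed.

Lemma unitaryE n (P : 'M[C]_n) : unitary P <-> P \is unitarymx.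
Proof.
rewrite /unitary adjmxE; split=> [[_ /unitarymxP] //|/unitarymxP PPt].
by split=> //; apply: mulmx1C.
Qed.

Lemma unitary1 n : unitary (1%:M : 'M[C]_n).
Proof. by rewrite /unitary adjmx1 mulmx1. Qed.

Lemma unitaryM n (P Q : 'M[C]_n) : unitary P -> unitary Q -> unitary (P *m Q).
Proof. by move=> /unitaryE Pu /unitaryE Qu; apply/unitaryE/mul_unitarymx. Qed.

Lemma unitary_adjmx n (P : 'M[C]_n) : unitary P -> unitary (adjmx P).
Proof. by move=> [PtP PPt]; rewrite /unitary adjmxK. Qed.

Lemma unitary_tens m n (P : 'M[C]_m) (Q : 'M[C]_n) :
  unitary P -> unitary Q -> unitary (P *t Q).
Proof.
move=> [PtP PPt] [QtQ QQt].
rewrite /unitary adjmx_tens !tensmx_mul PtP PPt QtQ QQt.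
suff -> : 1%:M *t 1%:M = 1%:M :> 'M[C]_(m * n) by [].
apply/matrixP => i j.
case: (mxtens_indexP i) => i1 i2; case: (mxtens_indexP j) => j1 j2.
by rewrite tensmxE !mxE (can_eq (@mxtens_indexK _ _)) xpair_eqE -natrM mulnb.
Qed.

Lemma unit_vec_dim_gt0 n (v : 'cV[C]_n) : unit_vec v -> (0 < n)%N.
Proof.
case: n v => [|n] v //.
by rewrite /unit_vec mxE big_ord0 => /eqP; rewrite eq_sym oner_eq0.
Qed.

Lemma unit_vec_unitary n (P : 'M[C]_n) (v : 'cV[C]_n) :
  unitary P -> unit_vec v -> unit_vec (P *m v).
Proof.
move=> [PtP _]; rewrite /unit_vec adjmxM mulmxA -(mulmxA _ _ P).
by rewrite PtP mulmx1.
Qed.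

Lemma unit_vec_delta n (i : 'I_n) : unit_vec (delta_mx i 0 : 'cV[C]_n).
Proof.
rewrite /unit_vec adjmxE mxE (bigD1 i) //= big1 => [|k /negPf nki].
  by rewrite !mxE !eqxx conjC1 mulr1 addr0.
by rewrite !mxE nki mulr0.
Qed.

Lemma unit_vec_tensl m n (x : 'cV[C]_m) (y : 'cV[C]_n) :
  unit_vec y -> unit_vec (x *t y) -> unit_vec x.
Proof.
rewrite /unit_vec (adjmx_tens x y) (tensmx_mul (adjmx x) (adjmx y) x y) => y1 <-.
have := tensmxE (adjmx x *m x) (adjmx y *m y) 0 0 0 0.
rewrite y1 mulr1 => <-.
by congr fun_of_matrix; apply: val_inj.
Qed.

End Adjoint.

Section Codiagonalization.
Variable C : numClosedFieldType.

Lemma comm_adjmx_unitary n (A B : 'M[C]_n) :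
  unitary B -> A *m B = B *m A -> A *m adjmx B = adjmx B *m A.
Proof.
move=> [BtB BBt] AB.
symmetry; rewrite -[adjmx B *m A]mulmx1 -BBt mulmxA -(mulmxA (adjmx B)) AB.
by rewrite !mulmxA BtB mul1mx.
Qed.

Lemma is_diag_mx_trig_adjmx n (T : 'M[C]_n) :
  is_trig_mx T -> is_trig_mx (adjmx T) -> is_diag_mx T.
Proof.
rewrite is_diag_mxEtrig => -> /is_trig_mxP Ttrig /=.
apply/is_trig_mxP => i j lt_ij; apply/eqP.
by rewrite -conjC_eq0 -(Ttrig i j lt_ij) /adjmx !mxE.
Qed.

Lemma commuting_unitary_codiag n K (U : 'I_K -> 'M[C]_n) :
  (forall j, unitary (U j)) -> (forall j k, U j *m U k = U k *m U j) ->
  exists2 Q : 'M[C]_n, unitary Q &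
    forall j, exists d : 'rV_n, U j = Q *m diag_mx d *m adjmx Q.
Proof.
move=> Uu Ucomm.
pose As := [seq U j | j <- enum 'I_K] ++ [seq adjmx (U j) | j <- enum 'I_K].
have AsU j : U j \in As.
  by rewrite mem_cat; apply/orP; left; apply: map_f; rewrite mem_enum.
have AsUt j : adjmx (U j) \in As.
  by rewrite mem_cat; apply/orP; right; apply: map_f; rewrite mem_enum.
have As_comm : {in As &, forall A B, comm_mx A B}.
  move=> A B; rewrite /comm_mx !mem_cat.
  move=> /orP[] /mapP[j _ ->] /orP[] /mapP[k _ ->].
  - exact: Ucomm.
  - exact: comm_adjmx_unitary.
  - by symmetry; apply: comm_adjmx_unitary.
  - by rewrite -!adjmxM Ucomm.
have [P Pu /allP Ptrig] := cotrigonalization As_comm.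
have [PtP _] : unitary P := proj2 (unitaryE P) Pu.
exists (adjmx P); first exact/unitary_adjmx/unitaryE.
move=> j; pose T := P *m U j *m adjmx P.
have conjPE A : conjmx P A = P *m A *m adjmx P by rewrite conjymx // adjmxE.
have /diag_mxP[d Td] : is_diag_mx T.
  apply: is_diag_mx_trig_adjmx; first by rewrite /T -conjPE; exact: Ptrig (AsU j).
  by rewrite /T !adjmxM adjmxK mulmxA -conjPE; exact: Ptrig (AsUt j).
by exists d; rewrite adjmxK -Td /T !mulmxA PtP mul1mx -mulmxA PtP mulmx1.
Qed.

End Codiagonalization.

Lemma unitary_col0 (C : numClosedFieldType) n (a : 'cV[C]_n.+1) :
  exists2 M : 'M[C]_n.+1, unitary M & exists c, a = c *: col 0 M.
Proof.
(* Gram-Schmidt applied to a matrix whose rows all equal [a^T]: its first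
   output row spans [a^T]. *)
pose A : 'M[C]_n.+1 := \matrix_(i, j) a j 0.
have /submxP[c ac] : (row 0 A <= row 0 (schmidt A))%MS.
  have := row_schmidt_sub A 0; rewrite (big_pred1 0) ?genmxE // => k.
  by rewrite /= leqn0.
exists (schmidt A)^T; first by apply/unitaryE; rewrite trmx_unitary schmidt_unitarymx.
exists (c 0 0); apply/matrixP => i j; rewrite [j]ord1.
have := congr1 (fun r : 'rV_n.+1 => r 0 i) ac.
by rewrite !mxE big_ord1 !mxE mulrC.
Qed.

Section BlockDiagonalTensor.
Variables (R : pzRingType) (n m : nat).

(* In the Kronecker coordinates of [mxtens], [tens_slice X k] is the block of
   rows of [X] indexed by [(k, _)], and [blockdiag_tens M] is the block-diagonal
   matrix [\sum_k 'E_kk *t M k]. *)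
Definition tens_slice p (X : 'M[R]_(n * m, p)) (k : 'I_n) : 'M[R]_(m, p) :=
  \matrix_(b, j) X (mxtens_index (k, b)) j.

Definition blockdiag_tens (M : 'I_n -> 'M[R]_m) : 'M[R]_(n * m) :=
  \matrix_(i, j) (((mxtens_unindex i).1 == (mxtens_unindex j).1)%:R *
                  M (mxtens_unindex i).1 (mxtens_unindex i).2 (mxtens_unindex j).2).

Lemma blockdiag_tensE M k a l b :
  blockdiag_tens M (mxtens_index (k, a)) (mxtens_index (l, b)) = (k == l)%:R * M k a b.
Proof. by rewrite mxE !mxtens_indexK. Qed.

Lemma eq_blockdiag_tens (M N : 'I_n -> 'M[R]_m) :
  (forall k, M k = N k) -> blockdiag_tens M = blockdiag_tens N.
Proof. by move=> MN; apply/matrixP => i j; rewrite !mxE MN. Qed.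

Lemma tens_sliceP p (X Y : 'M[R]_(n * m, p)) :
  (forall k, tens_slice X k = tens_slice Y k) -> X = Y.
Proof.
move=> XY; apply/matrixP => i j; case: (mxtens_indexP i) => k b.
by have /matrixP/(_ b j) := XY k; rewrite !mxE.
Qed.

Lemma big_mxtens_index (V : nmodType) (F : 'I_(n * m) -> V) :
  \sum_i F i = \sum_(k < n) \sum_(b < m) F (mxtens_index (k, b)).
Proof.
rewrite pair_big (reindex (@mxtens_index n m)) /=; first by apply: eq_bigr => -[].
by exists (@mxtens_unindex n m) => i _; rewrite (mxtens_indexK, mxtens_unindexK).
Qed.

Lemma tens_slice_blockdiag p M (X : 'M[R]_(n * m, p)) k :
  tens_slice (blockdiag_tens M *m X) k = M k *m tens_slice X k.
Proof.
apply/matrixP => a j; rewrite !mxE big_mxtens_index (bigD1 k) //=.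
rewrite [X in _ + X]big1 ?addr0.
  by apply: eq_bigr => b _; rewrite blockdiag_tensE eqxx mul1r !mxE.
move=> l /negPf nkl; apply: big1 => b _.
by rewrite blockdiag_tensE eq_sym nkl !mul0r.
Qed.

Lemma blockdiag_tensM M N :
  blockdiag_tens M *m blockdiag_tens N = blockdiag_tens (fun k => M k *m N k).
Proof.
apply: tens_sliceP => k.
rewrite -[blockdiag_tens N]mulmx1 -[blockdiag_tens (fun k => _ *m _)]mulmx1.
by rewrite !tens_slice_blockdiag mulmxA.
Qed.

Lemma blockdiag_tens1 : blockdiag_tens (fun _ => 1%:M) = 1%:M.
Proof.
apply: tens_sliceP => k.
by rewrite -[blockdiag_tens _]mulmx1 tens_slice_blockdiag mul1mx.
Qed.

Lemma tens_slice_tens (x : 'cV[R]_n) (y : 'cV[R]_m) k :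
  tens_slice (x *t y) k = x k 0 *: y.
Proof.
apply/matrixP => b j; rewrite [j]ord1 !mxE mxtens_indexK.
by congr (x k _ * y b _); apply: val_inj.
Qed.

Lemma diag_mx_tens1 (d : 'rV[R]_n) :
  diag_mx d *t 1%:M = blockdiag_tens (fun k => d 0 k *: 1%:M).
Proof.
apply/matrixP => i j.
case: (mxtens_indexP i) => {i} k a; case: (mxtens_indexP j) => {j} l b.
rewrite tensmxE blockdiag_tensE !mxE.
by case: (k == l); rewrite ?mulr1n ?mul1r ?mulr0n ?mul0r.
Qed.

End BlockDiagonalTensor.

Lemma blockdiag_tens_diag_comm (R : comPzRingType) n m
    (M : 'I_n -> 'M[R]_m) (d : 'rV[R]_n) :
  blockdiag_tens M *m (diag_mx d *t 1%:M) = (diag_mx d *t 1%:M) *m blockdiag_tens M.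
Proof.
rewrite diag_mx_tens1 !blockdiag_tensM; apply: eq_blockdiag_tens => k.
by rewrite -scalemxAr -scalemxAl mulmx1 mul1mx.
Qed.

Section UnitaryBlockDiagonal.
Variables (C : numClosedFieldType) (n m : nat).

Lemma adjmx_blockdiag_tens (M : 'I_n -> 'M[C]_m) :
  adjmx (blockdiag_tens M) = blockdiag_tens (fun k => adjmx (M k)).
Proof.
apply/matrixP => i j.
case: (mxtens_indexP i) => {i} k a; case: (mxtens_indexP j) => {j} l b.
rewrite blockdiag_tensE adjmxE !mxE !mxtens_indexK /= rmorphM rmorph_nat eq_sym.
by case: eqP => [->|]; rewrite ?mul0r.
Qed.

Lemma unitary_blockdiag_tens (M : 'I_n -> 'M[C]_m) :
  (forall k, unitary (M k)) -> unitary (blockdiag_tens M).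
Proof.
move=> Mu; rewrite /unitary adjmx_blockdiag_tens !blockdiag_tensM -blockdiag_tens1.
by split; apply: eq_blockdiag_tens => k; case: (Mu k).
Qed.

Lemma blockdiag_unitary_product (phi : 'cV[C]_(n * m.+1)) :
  exists2 M : 'I_n -> 'M[C]_m.+1, (forall k, unitary (M k)) &
    exists c : 'cV[C]_n, blockdiag_tens M *m (c *t (delta_mx 0 0 : 'cV_m.+1)) = phi.
Proof.
have [M Mu Mcol] := fin_all_exists2 (fun k => unitary_col0 (tens_slice phi k)).
have [c phiE] := fin_all_exists Mcol.
exists M => //; exists (\col_k c k); apply: tens_sliceP => k.
by rewrite tens_slice_blockdiag tens_slice_tens mxE -scalemxAr -colE -phiE.
Qed.

End UnitaryBlockDiagonal.

Theorem theorem2 (R : realType) (DQ DA K : nat) (hD : (DQ <= DA)%N)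
  (U : 'I_K -> 'M[R[i]]_DQ)
  (hU : forall j, unitary (U j))
  (hcomm : forall j k, U j *m U k = U k *m U j)
  (psi : 'cV[R[i]]_(DQ * DA)) (hpsi : unit_vec psi) :
  exists (xi : 'cV[R[i]]_DQ) (chi : 'cV[R[i]]_DA) (V : 'M[R[i]]_(DQ * DA)),
    [/\ unit_vec xi, unit_vec chi, unitary V &
      forall j, V *m ((U j *t 1%:M) *m (xi *t chi)) = (U j *t 1%:M) *m psi].
Proof.
have /unit_vec_dim_gt0 := hpsi; rewrite muln_gt0 => /andP[_].
case: DA hD psi hpsi => // m _ psi hpsi _.
have [Q Qu UQ] := commuting_unitary_codiag hU hcomm.
pose W : 'M[R[i]]_(DQ * m.+1) := Q *t 1%:M.
have Wu : unitary W := unitary_tens Qu (unitary1 _ _).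
have [M Mu [c Bc]] := blockdiag_unitary_product (adjmx W *m psi).
have Bu : unitary (blockdiag_tens M) := unitary_blockdiag_tens Mu.
pose e0 : 'cV[R[i]]_m.+1 := delta_mx 0 0.
have e0u : unit_vec e0 := unit_vec_delta _ 0.
exists (Q *m c), e0, (W *m blockdiag_tens M *m adjmx W); split.
- apply: unit_vec_unitary Qu _; apply: (unit_vec_tensl e0u).
  have -> : c *t e0 = adjmx (blockdiag_tens M) *m (adjmx W *m psi).
    by rewrite -Bc mulmxA (proj1 Bu) mul1mx.
  exact/(unit_vec_unitary (unitary_adjmx Bu))/(unit_vec_unitary (unitary_adjmx Wu)).
- exact: e0u.
- exact: unitaryM (unitaryM Wu Bu) (unitary_adjmx Wu).
move=> j; have [d Ud] := UQ j.
have UW : U j *t 1%:M = W *m (diag_mx d *t 1%:M) *m adjmx W.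
  by rewrite Ud adjmx_tens adjmx1 !tensmx_mul !mulmx1.
have xiW : (Q *m c) *t e0 = W *m (c *t e0).
  by rewrite tensmx_mul mul1mx.
rewrite UW xiW -!mulmxA !(mulmxA (adjmx W) W) (proj1 Wu) !mul1mx.
by rewrite (mulmxA (blockdiag_tens M)) blockdiag_tens_diag_comm -mulmxA Bc.
Qed.
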